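(* Let $a_1,a_2\in\Sigma$ with $a_1\neq a_2$, let $n_1\ge1$, $u\in\{a_1,a_2\}^+$ and $v\in(\Sigma\setminus\{a_1,a_2\})^+$, and let $w=a_1^{n_1}a_2uv$. Then there exists an element of $\mathtt{BR}(w)$ which is not rich.
   Context: $\Sigma$ is an alphabet; $X^+$ denotes the set of nonempty words over a set of letters $X$. For a word $w=w_1\cdots w_n$, $w^R=w_n\cdots w_1$; $w$ is a palindrome if $w=w^R$; a factor of $w$ is a word $u$ with $w=puq$. A word $w$ is rich if the number of distinct nonempty palindromic factors of $w$ equals $|w|$. The block reversal of a nonempty word $w$ is $\mathtt{BR}(w)=\{B_t\cdots B_1 : w=B_1\cdots B_t,\ t\ge1,\ \text{each } B_i \text{ nonempty}\}$. *)

From mathcomp Require Import all_boot.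
Set Implicit Arguments. Unset Strict Implicit. Unset Printing Implicit Defensive.

Section Words.
Variable Sigma : eqType.

Definition palindrome (w : seq Sigma) : bool := rev w == w.

Definition factors (w : seq Sigma) : seq (seq Sigma) :=
  [seq take l (drop i w) | i <- iota 0 (size w).+1, l <- iota 0 (size w).+1].

Definition pal_factors (w : seq Sigma) : seq (seq Sigma) :=
  undup [seq f <- factors w | (f != [::]) && palindrome f].

Definition rich (w : seq Sigma) : Prop := size (pal_factors w) = size w.

(* x is a block reversal of w: w = B_1 ... B_t (t >= 1, B_i nonempty)
   and x = B_t ... B_1 *)
Definition in_BR (w x : seq Sigma) : Prop :=
  exists bs : seq (seq Sigma),
    [/\ bs != [::], all (fun b => b != [::]) bs,
        flatten bs = w & x = flatten (rev bs)].

End Words.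

From mathcomp Require Import all_boot.

Set Implicit Arguments.
Unset Strict Implicit.
Unset Printing Implicit Defensive.

(* Appending a letter to a word creates at most one new palindromic factor
   (its longest palindromic suffix, if unioccurrent), so |Pal(x)| <= |x|, and x
   is not rich as soon as some prefix q c of x has all its palindromic suffixes
   already occurring in q.  Write u = u' e with e in {a1, a2} and reverse blocks
   so that x begins with u' e v f^m e, where f is the other letter of {a1, a2}.
   A palindromic suffix of this prefix starts with e; since v contains neither
   a1 nor a2 it is either the letter e or it contains the whole of v, and then
   matching the {a1, a2}-runs on both sides of v shows that it begins with
   e f^m on the left of v, contradicting that u' e ends with e. *)

Section Palindromes.
Variable Sigma : eqType.
Implicit Types (p q s t v w x y g : seq Sigma) (P : pred Sigma).

Lemma mem_factors w f : (f \in factors w) = infix f w.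
Proof.
apply/idP/idP.
- case/allpairsP => [[i l] /= [_ _ ->]].
  exact: (infix_trans (infix_take _ _) (infix_drop _ _)).
- move=> f_w; apply/allpairsP; exists (infix_index f w, size f); split.
  + by rewrite mem_iota add0n ltnS infixTindex.
  + by rewrite mem_iota add0n ltnS size_infix.
  + by apply/esym/eqP; rewrite -infixE.
Qed.

Lemma mem_pal_factors w f :
  (f \in pal_factors w) = [&& f != [::], palindrome f & infix f w].
Proof. by rewrite /pal_factors mem_undup mem_filter mem_factors -andbA. Qed.

Lemma palindrome_suffixE g w : palindrome g -> suffix g w = prefix g (rev w).
Proof. by move=> /eqP g_pal; rewrite -suffix_revLR g_pal. Qed.

Lemma cat_eq_cat x y s t : x ++ y = s ++ t ->
  (exists h, y = h ++ t /\ s = x ++ h) \/ (exists h, t = h ++ y /\ x = s ++ h).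
Proof.
elim: x s => [|z x IHx] [|z' s] /=.
- by move=> ->; left; exists [::].
- by move=> ->; left; exists (z' :: s).
- by move=> <-; right; exists (z :: x).
- case=> -> /IHx [[h [-> ->]]|[h [-> ->]]]; first by left; exists h.
  by right; exists h.
Qed.

Lemma suffix_catP g x y : suffix g (x ++ y) ->
  suffix g y \/ exists2 s, suffix s x & g = s ++ y.
Proof.
case/suffixP=> h /cat_eq_cat [[s [-> _]]|[s [-> ->]]].
- by left; apply: suffix_suffix.
- by right; exists s; first exact: suffix_suffix.
Qed.

Lemma suffix_le_size g1 g2 w : suffix g1 w -> suffix g2 w ->
  size g1 <= size g2 -> suffix g1 g2.
Proof.
rewrite /suffix !prefixE !size_rev => /eqP <- /eqP <- le_g12.
by rewrite take_takel.
Qed.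

Lemma suffix_eq_size g1 g2 w : suffix g1 w -> suffix g2 w ->
  size g1 = size g2 -> g1 = g2.
Proof.
move=> g1_w g2_w eq_size; have := suffix_le_size g1_w g2_w (eq_leq eq_size).
by rewrite suffixE eq_size subnn drop0 => /eqP.
Qed.

Lemma suffix_rcons_head z s w c :
  s != [::] -> suffix (z :: s) (rcons w c) -> z \in w.
Proof.
case/lastP: s => [//|s l] _; rewrite -rcons_cons suffix_rcons.
by case/andP=> _ /suffixW/mem_infix; apply; apply: mem_head.
Qed.

(* A shorter palindromic suffix is also a prefix of the longer one, and the
   longer one minus its last letter is a suffix of q. *)
Lemma palindrome_suffix_infix q c g1 g2 :
  palindrome g1 -> palindrome g2 ->
  suffix g1 (rcons q c) -> suffix g2 (rcons q c) -> size g1 < size g2 ->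
  infix g1 q.
Proof.
move=> g1_pal g2_pal g1_suf g2_suf lt_g12.
have := suffix_le_size g1_suf g2_suf (ltnW lt_g12).
rewrite palindrome_suffixE // (eqP g2_pal).
case/lastP: g2 g2_pal g2_suf lt_g12 => [//|g2 l] _.
rewrite suffix_rcons size_rcons ltnS => /andP[_ g2_q] le_g12.
rewrite prefixE -cats1 takel_cat // -prefixE => g1_g2.
exact: prefix_suffix_trans g1_g2 g2_q.
Qed.

Lemma new_palindrome_suffix_unique q c g1 g2 :
  palindrome g1 -> palindrome g2 ->
  suffix g1 (rcons q c) -> suffix g2 (rcons q c) ->
  ~~ infix g1 q -> ~~ infix g2 q -> g1 = g2.
Proof.
move=> g1_pal g2_pal g1_suf g2_suf g1_new g2_new.
case: (ltngtP (size g1) (size g2)) => [lt_g12|lt_g21|eq_size].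
- by rewrite (palindrome_suffix_infix g1_pal g2_pal g1_suf g2_suf) in g1_new.
- by rewrite (palindrome_suffix_infix g2_pal g1_pal g2_suf g1_suf) in g2_new.
- exact: suffix_eq_size g1_suf g2_suf eq_size.
Qed.

Lemma size_pal_factors_rcons q c :
  size (pal_factors (rcons q c)) <= (size (pal_factors q)).+1.
Proof.
have [/allP old | /allPn[g0 g0_qc g0_new]] :=
  boolP (all (fun g => g \in pal_factors q) (pal_factors (rcons q c))).
  by rewrite ltnW // ltnS uniq_leq_size // undup_uniq.
rewrite -[_.+1]/(size (g0 :: pal_factors q)) uniq_leq_size ?undup_uniq //.
move=> g g_qc; rewrite inE.
have [_|g_new] := boolP (g \in pal_factors q); rewrite ?orbT // orbF.
move: g_qc g0_qc g_new g0_new; rewrite !mem_pal_factors.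
case/and3P=> g_ne g_pal g_qc /and3P[g0_ne g0_pal g0_qc].
rewrite g_ne g_pal g0_ne g0_pal /= => g_new g0_new.
move: g_qc g0_qc; rewrite !infix_rconsl (negbTE g_new) (negbTE g0_new) !orbF.
move=> g_suf g0_suf.
by rewrite (new_palindrome_suffix_unique g_pal g0_pal g_suf g0_suf).
Qed.

Lemma size_pal_factors_cat p t :
  size (pal_factors (p ++ t)) <= size (pal_factors p) + size t.
Proof.
elim/last_ind: t => [|t y IHt]; first by rewrite cats0 addn0.
rewrite -rcons_cat size_rcons addnS.
exact: leq_trans (size_pal_factors_rcons _ _) _.
Qed.

Lemma size_pal_factors w : size (pal_factors w) <= size w.
Proof. by have := size_pal_factors_cat [::] w. Qed.

Lemma not_rich_rcons_cat q c t :
  (forall g, g != [::] -> palindrome g -> suffix g (rcons q c) -> infix g q) ->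
  ~ rich (rcons q c ++ t).
Proof.
move=> no_new; rewrite /rich => rich_qct.
have pal_qc : size (pal_factors (rcons q c)) <= size (pal_factors q).
  apply: uniq_leq_size; first exact: undup_uniq.
  move=> g; rewrite !mem_pal_factors infix_rconsl.
  case/and3P=> g_ne g_pal /orP[/(no_new g g_ne g_pal)|] ->;
    by rewrite g_ne g_pal.
have := size_pal_factors_cat (rcons q c) t.
rewrite rich_qct size_cat size_rcons leq_add2r => pal_q.
by have := leq_trans pal_q pal_qc; rewrite ltnNge size_pal_factors.
Qed.

(* The first letter outside P sits just after s on the left and just after
   rev t on the right. *)
Lemma palindrome_cat3 P s v t :
  all P s -> all P t -> v != [::] -> all (predC P) v ->
  palindrome (s ++ v ++ t) -> s = rev t.
Proof.
move=> Ps Pt v_ne Pv /eqP; rewrite !rev_cat -catA => pal.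
have find_notP x y z : all P x -> y != [::] -> all (predC P) y ->
    find (predC P) (x ++ y ++ z) = size x.
  move=> Px; rewrite find_cat has_predC Px.
  by case: y => //= d y _ /andP[-> _]; rewrite addn0.
have eq_size : size (rev t) = size s.
  rewrite -(find_notP _ (rev v) (rev s)) ?all_rev //; last first.
    by rewrite -size_eq0 size_rev size_eq0.
  by rewrite pal find_notP.
by rewrite -[RHS](take_size_cat (rev v ++ rev s) eq_size) pal take_size_cat.
Qed.

Lemma palindrome_suffix_straddle P p c v f m g :
  all P (rcons p c) -> P f -> f != c -> 0 < m ->
  v != [::] -> all (predC P) v ->
  g != [::] -> palindrome g ->
  suffix g (rcons (rcons p c ++ v ++ nseq m f) c) ->
  infix g (rcons p c ++ v ++ nseq m f).
Proof.
move=> Pp Pf f_c m_gt0 v_ne Pv g_ne g_pal.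
have Pc : P c by move: Pp; rewrite all_rcons => /andP[].
have Pt : all P (rcons (nseq m f) c) by rewrite all_rcons Pc all_nseq Pf orbT.
move=> g_suf; have g_head : prefix g (c :: rev (rcons p c ++ v ++ nseq m f)).
  by rewrite -rev_rcons -palindrome_suffixE.
move: g_suf; rewrite !rcons_cat; case/suffix_catP => [|[s s_p g_def]].
- case: g g_ne g_pal g_head => [//|z g] _ _ /andP[/eqP-> _].
  have [-> _|g_ne] := eqVneq g [::].
    by rewrite infix1s mem_cat mem_rcons mem_head.
  rewrite -rcons_cat => /(suffix_rcons_head g_ne); rewrite mem_cat mem_nseq.
  case/orP=> [/(allP Pv)|/andP[_ /eqP c_f]]; first by rewrite /= Pc.
  by rewrite c_f eqxx in f_c.
- have Ps : all P s.
    by apply/allP=> z /(mem_infix (suffixW s_p)); apply/allP.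
  move: g_pal; rewrite g_def => /(palindrome_cat3 Ps Pt v_ne Pv) s_def.
  move: s_p; rewrite s_def suffix_revLR rev_rcons.
  by case: m m_gt0 {Pt s_def g_def g_head} => [//|m] _; rewrite /= (negbTE f_c).
Qed.

Lemma not_rich_straddle P p c v f m t :
  all P (rcons p c) -> P f -> f != c -> 0 < m ->
  v != [::] -> all (predC P) v ->
  ~ rich (rcons (rcons p c ++ v ++ nseq m f) c ++ t).
Proof.
move=> Pp Pf f_c m_gt0 v_ne Pv; apply: not_rich_rcons_cat => g.
exact: (palindrome_suffix_straddle Pp Pf f_c m_gt0 v_ne Pv).
Qed.

Lemma in_BR_swap x y : x != [::] -> y != [::] -> in_BR (x ++ y) (y ++ x).
Proof. by move=> x_ne y_ne; exists [:: x; y]; rewrite /= x_ne y_ne !cats0. Qed.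

Lemma in_BR_swap3 x y z : x != [::] -> y != [::] -> z != [::] ->
  in_BR (x ++ y ++ z) (z ++ y ++ x).
Proof.
move=> x_ne y_ne z_ne; exists [:: x; y; z].
by rewrite /= x_ne y_ne z_ne !cats0 catA.
Qed.

End Palindromes.

Theorem mainTheorem4 (Sigma : eqType) (a1 a2 : Sigma) (n1 : nat)
    (u v : seq Sigma) :
  a1 != a2 -> 1 <= n1 ->
  u != [::] -> all (fun c => (c == a1) || (c == a2)) u ->
  v != [::] -> all (fun c => (c != a1) && (c != a2)) v ->
  exists x : seq Sigma,
    in_BR (nseq n1 a1 ++ a2 :: u ++ v) x /\ ~ rich x.
Proof.
move=> a1_a2 n1_gt0 u_ne Pu v_ne Pv.
pose P := [pred z | (z == a1) || (z == a2)].
have notPv : all (predC P) v by apply/allP=> z /(allP Pv); rewrite /= negb_or.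
have Pa1 : P a1 by rewrite /= eqxx.
have Pa2 : P a2 by rewrite /= eqxx orbT.
case/lastP: u u_ne Pu => [//|u e] _ Pue.
have uv_ne : rcons u e ++ v != [::] by case: (u).
move: (Pue); rewrite all_rcons => /andP[/orP[]/eqP e_def _]; subst e.
- exists ((rcons u a1 ++ v) ++ [:: a2] ++ nseq n1 a1); split.
    have a1n_ne : nseq n1 a1 != [::] by case: n1 n1_gt0.
    exact: (in_BR_swap3 (y := [:: a2]) a1n_ne isT uv_ne).
  case: n1 n1_gt0 => [//|n] _.
  have -> : (rcons u a1 ++ v) ++ [:: a2] ++ nseq n.+1 a1
          = rcons (rcons u a1 ++ v ++ nseq 1 a2) a1 ++ nseq n a1.
    by rewrite -!cats1 -!catA.
  have a2_a1 : a2 != a1 by rewrite eq_sym.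
  exact: (not_rich_straddle (P := P) Pue Pa2 a2_a1 (ltn0Sn 0) v_ne notPv).
- exists ((rcons u a2 ++ v) ++ nseq n1 a1 ++ [:: a2]); split.
    rewrite -cat1s catA; apply: in_BR_swap => //.
    by rewrite cats1 -size_eq0 size_rcons.
  have -> : (rcons u a2 ++ v) ++ nseq n1 a1 ++ [:: a2]
          = rcons (rcons u a2 ++ v ++ nseq n1 a1) a2 ++ [::].
    by rewrite cats0 -!cats1 -!catA.
  exact: (not_rich_straddle (P := P) Pue Pa1 a1_a2 n1_gt0 v_ne notPv).
Qed.
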